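(* For every natural number $n\ge 2$, the simplicial complex ${\rm Bd}(\mathrm{DG}_n)$ collapses onto $\Delta(\bar\Pi_n)$ (where a simplex of $\mathrm{DG}_n$ is identified with the set partition of $[n]$ into the connected components of the corresponding graph).
   Context: $\mathrm{DG}_n$ is the simplicial complex whose vertices are all pairs $(i,j)$ with $1\le i<j\le n$ (possible edges of a graph on vertex set $[n]=\{1,\dots,n\}$) and whose simplices are the nonempty sets of such edges forming a graph on $[n]$ with at least two connected components. $\Pi_n$ is the partition lattice of all set partitions of $[n]$ ordered by refinement, $\bar\Pi_n=\Pi_n\setminus\{\hat0,\hat1\}$. ${\rm Bd}$ denotes barycentric subdivision and $\Delta(Q)$ the order complex of a poset $Q$ (simplices = nonempty chains). *)

From mathcomp Require Import all_boot.
Set Implicit Arguments. Unset Strict Implicit. Unset Printing Implicit Defensive.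

(* A (finite abstract) simplicial complex on a finite vertex type V is
   represented by its set of (nonempty) faces. *)

Definition elem_collapse (V : finType) (K K' : {set {set V}}) : Prop :=
  exists s t : {set V},
    [/\ s \in K, t \in K, s \proper t, #|t| = #|s|.+1
      & (forall r, r \in K -> s \subset r -> r = s \/ r = t)] /\
    K' = K :\: [set s; t].

Inductive collapses (V : finType) : {set {set V}} -> {set {set V}} -> Prop :=
| collapses_refl K : collapses K K
| collapses_step K K' L : elem_collapse K K' -> collapses K' L -> collapses K L.

Definition is_chain (T : finType) (le : rel T) (c : {set T}) : bool :=
  [forall x in c, forall y in c, le x y || le y x].

Definition Bd (V : finType) (K : {set {set V}}) : {set {set {set V}}} :=
  [set c : {set {set V}} | [&& c \subset K, c != set0 &
                              is_chain (fun x y : {set V} => x \subset y) c]].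

Definition edgeT (n : nat) := ('I_n * 'I_n)%type.

Definition all_edges (n : nat) : {set edgeT n} := [set e : edgeT n | e.1 < e.2].

Definition adj (n : nat) (G : {set edgeT n}) : rel 'I_n :=
  fun x y => ((x, y) \in G) || ((y, x) \in G).

Definition comp_of (n : nat) (G : {set edgeT n}) (x : 'I_n) : {set 'I_n} :=
  [set y | connect (adj G) x y].

Definition comps (n : nat) (G : {set edgeT n}) : {set {set 'I_n}} :=
  [set comp_of G x | x : 'I_n].

Definition DG (n : nat) : {set {set edgeT n}} :=
  [set G : {set edgeT n} | [&& G \subset all_edges n, G != set0 & 2 <= #|comps G|]].

Definition is_setpart (n : nat) (P : {set {set 'I_n}}) : bool :=
  partition P [set: 'I_n].

Definition part_bot (n : nat) : {set {set 'I_n}} := [set [set i] | i : 'I_n].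
Definition part_top (n : nat) : {set {set 'I_n}} := [set [set: 'I_n]].

Definition refines (n : nat) (P Q : {set {set 'I_n}}) : bool :=
  [forall A in P, exists B in Q, A \subset B].

Definition Pibar (n : nat) : {set {set {set 'I_n}}} :=
  [set P | [&& is_setpart P, P != part_bot n & P != part_top n]].

Definition DeltaPibar (n : nat) : {set {set {set {set 'I_n}}}} :=
  [set c : {set {set {set 'I_n}}} | [&& c \subset Pibar n, c != set0 & is_chain (@refines n) c]].

(* This is the
   simplex of DG_n whose component partition is P, and which is used to
   identify Delta(\bar Pi_n) with a subcomplex of Bd(DG_n). *)
Definition part_graph (n : nat) (P : {set {set 'I_n}}) : {set edgeT n} :=
  [set e : edgeT n | (e.1 < e.2) && [exists B in P, (e.1 \in B) && (e.2 \in B)]].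

Definition DeltaPibar_in_BdDG (n : nat) : {set {set {set edgeT n}}} :=
  [set @part_graph n @: c | c : {set {set {set 'I_n}}} in DeltaPibar n].

From mathcomp Require Import all_boot.
Set Implicit Arguments. Unset Strict Implicit. Unset Printing Implicit Defensive.

(* Sending a graph G to the complete graph on each of its components is a
   closure operator on the face poset of DG_n, and its closed faces are exactly
   the graphs of the partitions in \bar Pi_n, ordered as in Pi_n.  For any
   closure operator, the order complex collapses onto the order complex of the
   closed elements: remove the non-closed elements x one at a time, largest
   first.  When x is removed, every element strictly above x is closed, so the
   closure y of x is the least element strictly above x; the chains through x
   then pair off as c <-> y |: c, and these pairs are elementary collapses,
   performed from the longest chains down. *)

Lemma collapses_trans (V : finType) (K M L : {set {set V}}) :
  collapses K M -> collapses M L -> collapses K L.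
Proof. by elim=> [//|K1 K' M1 K1K' _ IH] /IH; apply: collapses_step. Qed.

Lemma eq_setD1_setU1 (T : finType) (y : T) (s c : {set T}) :
  y \notin s -> (c :\ y == s) = (c == s) || (c == y |: s).
Proof.
move=> ys; apply/eqP/orP => [<-|[]/eqP->]; last by rewrite setU1K.
- case yc: (y \in c); first by right; rewrite setD1K.
  by left; apply/eqP/setP=> z; rewrite in_setD1; case: eqP => // ->; rewrite yc.
- by apply/setP=> z; rewrite in_setD1; case: eqP => // ->; rewrite (negbTE ys).
Qed.

Section RemoveFace.
Variables (T : finType) (S : {set {set T}}) (x y : {set T}).
Hypotheses (yS : y \in S) (xy : x \proper y).
Hypothesis y_least : forall z, z \in S -> x \proper z -> y \subset z.

Let sxy : x \subset y. Proof. exact: proper_sub xy. Qed.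
Let nxy : x != y. Proof. by case/andP: xy => _; apply: contraNneq => ->. Qed.

Lemma Bd_setU1_least c : c \in Bd S -> x \in c -> y |: c \in Bd S.
Proof.
rewrite !inE => /and3P [cS _ chain_c] xc; apply/and3P; split.
- by rewrite subUset sub1set yS cS.
- by apply/set0Pn; exists y; rewrite setU11.
have y_cmp b : b \in c -> (y \subset b) || (b \subset y).
  move=> bc; have /orP[xb|bx] := forall_inP (forall_inP chain_c x xc) b bc.
    have [<-|nxb] := eqVneq x b; first by rewrite sxy orbT.
    by rewrite y_least ?properEneq ?nxb ?xb // (subsetP cS).
  by rewrite (subset_trans bx sxy) orbT.
apply/forall_inP=> a /setU1P[->|ac]; apply/forall_inP => b /setU1P[->|bc].
- by rewrite subxx.
- exact: y_cmp.
- by rewrite orbC y_cmp.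
- exact: forall_inP (forall_inP chain_c a ac) b bc.
Qed.

(* Chains through x missing y: the free faces, each paired with y |: c. *)
Definition free_chains := [set c in Bd S | (x \in c) && (y \notin c)].

Lemma in_free_chains c :
  (c \in free_chains) = [&& c \in Bd S, x \in c & y \notin c].
Proof. by rewrite /free_chains; move: (Bd S) => B; rewrite inE. Qed.

(* Bd S with its chains through x cut down to the pairs (c, y |: c), c in R. *)
Definition Bd_matched (R : {set {set {set T}}}) :=
  [set c in Bd S | (x \notin c) || (c :\ y \in R)].

Lemma in_Bd_matched R c :
  (c \in Bd_matched R) = (c \in Bd S) && ((x \notin c) || (c :\ y \in R)).
Proof. by rewrite /Bd_matched; move: (Bd S) => B; rewrite inE. Qed.

Lemma elem_collapse_Bd_matched (R : {set {set {set T}}}) s :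
  R \subset free_chains -> s \in R -> (forall r, r \in R -> #|r| <= #|s|) ->
  elem_collapse (Bd_matched R) (Bd_matched (R :\ s)).
Proof.
move=> Rfree sR s_max; have := subsetP Rfree s sR; rewrite in_free_chains => /and3P[sBd xs ys].
have s_eq : s :\ y = s by apply/setDidPl; rewrite disjoint_sym disjoints1.
have yBd := Bd_setU1_least sBd xs.
exists s, (y |: s); split; first split.
- by rewrite in_Bd_matched sBd s_eq sR orbT.
- by rewrite in_Bd_matched yBd setU1K ?sR ?orbT.
- by rewrite properEneq subsetUr andbT; apply: contraNneq ys => ->; rewrite setU11.
- by rewrite cardsU1 ys.
- move=> r; rewrite in_Bd_matched => /andP[_ r_matched] sr.
  have xr : x \in r by apply: (subsetP sr).
  rewrite xr /= in r_matched.
  have sry : s \subset r :\ y by rewrite subsetD1 sr ys.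
  have : r :\ y == s by rewrite eq_sym eqEcard sry s_max.
  by rewrite eq_setD1_setU1 // => /orP[]/eqP; [left|right].
apply/setP=> c; rewrite in_setD in_set2 !in_Bd_matched.
case: (c \in Bd S); rewrite ?andbF //=.
have [xc|xc] /= := boolP (x \in c); first by rewrite in_setD1 eq_setD1_setU1.
by rewrite andbT; apply/esym/negP => /orP[]/eqP c_eq; rewrite c_eq ?in_setU1 xs ?orbT in xc.
Qed.

Lemma collapses_Bd_matched (R : {set {set {set T}}}) :
  R \subset free_chains -> collapses (Bd_matched R) (Bd_matched set0).
Proof.
have [k] := ubnP #|R|; elim: k R => // k IH R; rewrite ltnS => Rk Rfree.
have [->|/set0Pn[s0 s0R]] := eqVneq R set0; first exact: collapses_refl.
have [s sR s_max] := @arg_maxnP _ s0 (mem R) (fun r => #|r|) s0R.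
apply: collapses_step (elem_collapse_Bd_matched Rfree sR s_max) (IH _ _ _).
- by move: Rk; rewrite (cardsD1 s R) (_ : s \in R).
- exact: subset_trans (subD1set _ _) Rfree.
Qed.

Lemma Bd_matched_free : Bd_matched free_chains = Bd S.
Proof.
apply/setP=> c; rewrite in_Bd_matched; case cBd: (c \in Bd S) => //=.
have [xc|//] /= := boolP (x \in c); rewrite in_free_chains !in_setD1 eqxx nxy xc /= andbT.
move: cBd; rewrite !inE => /and3P[cS _ chain_c].
rewrite (subset_trans (subD1set _ _) cS) /=; apply/andP; split.
  by apply/set0Pn; exists x; rewrite in_setD1 nxy xc.
apply/forall_inP=> a /setD1P[_ ac]; apply/forall_inP=> b /setD1P[_ bc].
exact: forall_inP (forall_inP chain_c a ac) b bc.
Qed.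

Lemma Bd_matched0 : Bd_matched set0 = Bd (S :\ x).
Proof.
apply/setP=> c; rewrite !inE orbF; apply/idP/idP.
- case/andP=> /and3P[cS -> ->] xc; rewrite !andbT.
  by apply/subsetP=> z zc; rewrite in_setD1 (subsetP cS) // andbT; apply: contraNneq xc => <-.
- case/and3P=> cS -> ->; rewrite (subset_trans cS (subD1set _ _)) /=.
  by apply/negP => /(subsetP cS); rewrite setD11.
Qed.

Lemma collapses_Bd_setD1 : collapses (Bd S) (Bd (S :\ x)).
Proof. by rewrite -Bd_matched_free -Bd_matched0; apply: collapses_Bd_matched. Qed.

End RemoveFace.

Lemma collapses_Bd_closure (T : finType) (S L : {set {set T}}) (cl : {set T} -> {set T}) :
  L \subset S -> (forall x, x \in S -> cl x \in L) ->
  (forall x, x \in S -> x \subset cl x) ->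
  (forall x z, x \in S -> z \in L -> x \subset z -> cl x \subset z) ->
  collapses (Bd S) (Bd L).
Proof.
have [k] := ubnP #|S :\: L|; elim: k S => // k IH S.
rewrite ltnS => Sk LS clL x_cl cl_min.
have [/eqP|/set0Pn[x0 x0SL]] := eqVneq (S :\: L) set0.
  rewrite setD_eq0 => SL; have -> : S = L by apply/eqP; rewrite eqEsubset SL LS.
  exact: collapses_refl.
have [x /setDP[xS xL] x_max] := @arg_maxnP _ x0 (mem (S :\: L)) (fun r => #|r|) x0SL.
have xcl : x \proper cl x.
  by rewrite properEneq x_cl // andbT; apply: contraNneq xL => ->; rewrite clL.
have above_closed z : z \in S -> x \proper z -> z \in L.
  move=> zS xz; apply: contraTT (proper_card xz) => zL.
  by rewrite -leqNgt; apply: x_max; rewrite inE /= in_setD zL zS.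
apply: collapses_trans (collapses_Bd_setD1 (subsetP LS _ (clL x xS)) xcl _) (IH _ _ _ _ _ _).
- by move=> z zS xz; rewrite cl_min ?above_closed ?proper_sub.
- by move: Sk; rewrite setDDl setUC -setDDl (cardsD1 x (S :\: L)) in_setD xS xL.
- by apply/subsetP=> z zL; rewrite in_setD1 (subsetP LS) // andbT; apply: contraNneq xL => <-.
- by move=> z /setD1P[_]; apply: clL.
- by move=> z /setD1P[_]; apply: x_cl.
- by move=> z w /setD1P[_]; apply: cl_min.
Qed.

Section PartitionGraphs.
Variable n : nat.
Implicit Types (G H : {set edgeT n}) (P Q : {set {set 'I_n}}).

Lemma connect_adj_sym G : connect_sym (adj G).
Proof. by apply: sym_connect_sym => a b; rewrite /adj orbC. Qed.

Lemma mem_comp_of G a : a \in comp_of G a.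
Proof. by rewrite inE connect0. Qed.

Lemma comps_partition G : is_setpart (comps G).
Proof.
apply/and3P; split.
- apply/eqP/setP=> a; rewrite in_setT; apply/bigcupP.
  by exists (comp_of G a); [apply: imset_f | apply: mem_comp_of].
- apply/trivIsetP => _ _ /imsetP[a _ ->] /imsetP[b _ ->].
  apply: contraR => /pred0Pn[c /andP[]]; rewrite !inE => ac bc.
  by apply/eqP/setP=> d; rewrite !inE (same_connect (connect_adj_sym G) ac)
                                    (same_connect (connect_adj_sym G) bc).
- by apply/imsetP => -[a _ /setP/(_ a)]; rewrite mem_comp_of inE.
Qed.

Lemma connect_adj_sub G H a b : G \subset H -> connect (adj G) a b -> connect (adj H) a b.
Proof.
move=> GH; apply: connect_sub => u v /orP[] /(subsetP GH) uvH;
by apply: connect1; rewrite /adj uvH ?orbT.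
Qed.

Lemma adj_part_graph P u v :
  adj (part_graph P) u v = (u != v) && [exists B in P, (u \in B) && (v \in B)].
Proof.
rewrite /adj !inE /=.
have -> : [exists B in P, (v \in B) && (u \in B)] = [exists B in P, (u \in B) && (v \in B)].
  by apply: eq_existsb => B; rewrite (andbC (v \in B)).
by rewrite -andb_orl -neq_ltn.
Qed.

Lemma connect_part_graph P a b :
  is_setpart P -> connect (adj (part_graph P)) a b = (b \in pblock P a).
Proof.
case/and3P => /eqP coverP trivP _.
have inP c : c \in cover P by rewrite coverP in_setT.
apply/idP/idP => [|b_in].
- have blocks_closed : closed (adj (part_graph P)) (pblock P a).
    move=> u v; rewrite adj_part_graph => /andP[_ /exists_inP[B BP /andP[uB vB]]].
    by rewrite -!eq_pblock // (def_pblock trivP BP uB) (def_pblock trivP BP vB).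
  by move/(closed_connect blocks_closed) <-; rewrite mem_pblock.
- have [<-|nab] := eqVneq a b; first exact: connect0.
  apply: connect1; rewrite adj_part_graph nab; apply/exists_inP.
  by exists (pblock P a); rewrite ?pblock_mem ?mem_pblock ?inP ?b_in.
Qed.

Lemma comps_part_graph P : is_setpart P -> comps (part_graph P) = P.
Proof.
move=> setpartP; have /and3P[/eqP coverP trivP nonemptyP] := setpartP.
have comp_pblock a : comp_of (part_graph P) a = pblock P a.
  by apply/setP=> b; rewrite inE connect_part_graph.
apply/setP=> B; apply/imsetP/idP => [[a _ ->]|BP].
  by rewrite comp_pblock pblock_mem // coverP in_setT.
have /set0Pn[a aB] : B != set0 by apply: contraNneq nonemptyP => <-.
by exists a; rewrite // comp_pblock (def_pblock trivP BP aB).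
Qed.

Lemma part_graph_subset P Q : is_setpart P -> is_setpart Q ->
  (part_graph P \subset part_graph Q) = refines P Q.
Proof.
move=> setpartP setpartQ; apply/idP/forall_inP => [PQ A AP|refPQ].
  have /set0Pn[a aA] : A != set0 by case/and3P: setpartP => _ _; apply: contraNneq => <-.
  have [/eqP coverQ _ _] := and3P setpartQ.
  apply/exists_inP; exists (pblock Q a); first by rewrite pblock_mem // coverQ in_setT.
  apply/subsetP=> b bA; rewrite -connect_part_graph //; apply: connect_adj_sub PQ _.
  by rewrite connect_part_graph // (def_pblock _ AP aA) //; case/and3P: setpartP.
apply/subsetP=> e; rewrite !inE => /andP[-> /exists_inP[A AP /andP[e1A e2A]]].
have /exists_inP[B BQ AB] := refPQ A AP.
by apply/exists_inP; exists B; rewrite ?(subsetP AB).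
Qed.

Lemma comps0 : comps (set0 : {set edgeT n}) = part_bot n.
Proof.
have no_edges : closed (adj (set0 : {set edgeT n})) (pred1 _).
  by move=> ? ? ?; rewrite /adj !inE.
apply: eq_imset => a; apply/setP => b; rewrite !inE; apply/idP/idP => [ab|/eqP<-].
  by move: (closed_connect (no_edges a) ab); rewrite !inE eqxx => <-.
exact: connect0.
Qed.

Lemma card_setpart_gt1 P : 0 < n -> is_setpart P -> P != part_top n -> 1 < #|P|.
Proof.
move=> n_gt0 /and3P[/eqP coverP _ _] Ptop; rewrite ltnNge leq_eqVlt ltnS leqn0 cards_eq0.
apply/negP => /orP[/cards1P[B PB]|/eqP P0].
  by move: Ptop; rewrite /part_top PB -[B]cover1 -PB coverP eqxx.
by move/setP/(_ (Ordinal n_gt0)): coverP; rewrite P0 /cover big_set0 !inE.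
Qed.

Lemma part_graph_in_DG P : 0 < n -> P \in Pibar n -> part_graph P \in DG n.
Proof.
move=> n_gt0; rewrite !inE => /and3P[setpartP Pbot Ptop]; apply/and3P; split.
- by apply/subsetP=> e; rewrite !inE => /andP[].
- by apply: contra_neq Pbot => P0; rewrite -comps0 -P0 comps_part_graph.
- by rewrite comps_part_graph // card_setpart_gt1.
Qed.

Lemma comps_in_Pibar G : G \in DG n -> comps G \in Pibar n.
Proof.
rewrite !inE => /and3P[G_edges /set0Pn[[u v] uvG] two_comps].
rewrite comps_partition /=; apply/andP; split; last first.
  by apply: contraTneq two_comps => ->; rewrite cards1.
apply/eqP => /setP/(_ (comp_of G u)); rewrite imset_f // => /esym/imsetP[w _ uw].
have uv_conn : v \in comp_of G u by rewrite inE connect1 // /adj uvG.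
have := subsetP G_edges _ uvG; rewrite inE /=.
by move: (mem_comp_of G u) uv_conn; rewrite uw !inE => /eqP-> /eqP->; rewrite ltnn.
Qed.

Lemma subset_part_graph_comps G : G \subset all_edges n -> G \subset part_graph (comps G).
Proof.
move=> G_edges; apply/subsetP=> -[u v] uvG; have := subsetP G_edges _ uvG.
rewrite !inE /= => -> /=; apply/exists_inP; exists (comp_of G u); first exact: imset_f.
by rewrite mem_comp_of inE connect1 // /adj uvG.
Qed.

Lemma part_graph_comps_min G Q : is_setpart Q -> G \subset part_graph Q ->
  part_graph (comps G) \subset part_graph Q.
Proof.
move=> setpartQ GQ; rewrite part_graph_subset ?comps_partition //.
have [/eqP coverQ _ _] := and3P setpartQ.
apply/forall_inP => _ /imsetP[a _ ->]; apply/exists_inP.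
exists (pblock Q a); first by rewrite pblock_mem // coverQ in_setT.
by apply/subsetP => b; rewrite inE -connect_part_graph //; apply: connect_adj_sub.
Qed.

End PartitionGraphs.

Lemma setpart_Pibar n (P : {set {set 'I_n}}) : P \in Pibar n -> is_setpart P.
Proof. by rewrite inE => /and3P[]. Qed.

Lemma DeltaPibar_in_BdDG_E (n : nat) :
  DeltaPibar_in_BdDG n = Bd (@part_graph n @: Pibar n).
Proof.
apply/setP => d; apply/imsetP/idP.
- case=> c; rewrite inE => /and3P[cPibar c_ne chain_c] ->; rewrite inE.
  rewrite imsetS // imset_eq0 c_ne; apply/forall_inP => _ /imsetP[P Pc ->].
  apply/forall_inP => _ /imsetP[Q Qc ->].
  rewrite !part_graph_subset ?setpart_Pibar ?(subsetP cPibar) //.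
  exact: forall_inP (forall_inP chain_c P Pc) Q Qc.
- rewrite inE => /and3P[dL d_ne chain_d].
  have d_im : d = @part_graph n @: [set P in Pibar n | part_graph P \in d].
    apply/setP=> H; apply/idP/imsetP => [Hd|[P] /[!inE] /andP[_ Pd] -> //].
    by have /imsetP[P PPibar eH] := subsetP dL _ Hd; exists P; rewrite // inE PPibar -eH.
  exists [set P in Pibar n | part_graph P \in d] => //; rewrite inE; apply/and3P; split.
  + by apply/subsetP=> P; rewrite inE => /andP[].
  + by move: d_ne; rewrite {1}d_im imset_eq0.
  + apply/forall_inP => P; rewrite inE => /andP[/setpart_Pibar sP Pd].
    apply/forall_inP => Q; rewrite inE => /andP[/setpart_Pibar sQ Qd].
    by rewrite -!part_graph_subset //; apply: forall_inP (forall_inP chain_d _ Pd) _ Qd.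
Qed.

Theorem mainTheorem4 (n : nat) (hn : 2 <= n) :
  collapses (Bd (DG n)) (DeltaPibar_in_BdDG n).
Proof.
have n_gt0 : 0 < n by apply: leq_trans hn.
rewrite DeltaPibar_in_BdDG_E.
apply: (@collapses_Bd_closure _ _ _ (fun G => part_graph (comps G))).
- by apply/subsetP=> _ /imsetP[P PPibar ->]; apply: part_graph_in_DG.
- by move=> G GDG; rewrite imset_f // comps_in_Pibar.
- by move=> G; rewrite inE => /and3P[G_edges _ _]; apply: subset_part_graph_comps.
- move=> G _ _ /imsetP[Q /setpart_Pibar setpartQ ->].
  exact: part_graph_comps_min.
Qed.
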